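(* Let $\frac{4}{3}\le p\le\frac{\log 3}{\log 2}$. The function $L(\alpha)=1+2\sin^p(\frac{\alpha}{2})+\cos^p\alpha$ on $\alpha\in[0,\frac{\pi}{3}]$ attains its minimum at the endpoints of the interval. In particular $L(\alpha)\ge 2$ for all $\alpha\in[0,\frac{\pi}{3}]$. *)

From Stdlib Require Import Reals.
Open Scope R_scope.

(* Real power x^p for x >= 0 and p > 0, with the convention 0^p = 0.
   (Stdlib's Rpower 0 p = exp (p * ln 0) = 1, which is wrong at 0.) *)
Definition rpow (x p : R) : R :=
  if Rle_dec x 0 then 0 else Rpower x p.

Definition Lfun (p a : R) : R :=
  1 + 2 * rpow (sin (a / 2)) p + rpow (cos a) p.

(* Put s = sin (a/2), so that cos a = 1 - 2 s^2 and L = 1 + G s with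
   G s = 2 s^p + (1 - 2 s^2)^p on [0, 1/2].  Then G' s = 2 p s^(p-1) (1 - 2 psi s)
   with psi s = s^(2-p) (1 - 2 s^2)^(p-1).  The logarithm of psi increases while
   2 p s^2 <= 2 - p and decreases afterwards; since p >= 4/3 the turning point lies
   in [0, 1/2], and log psi (1/2) = - ln 2.  So on [0, 1/2] the sign of G' can only
   change from + to -, G is smallest at an endpoint, and G 0 = 1 <= 3 * 2^(-p) = G (1/2)
   precisely when p <= ln 3 / ln 2. *)

From Stdlib Require Import Reals Lra.
From Coquelicot Require Import Coquelicot.
Open Scope R_scope.

Lemma exp_le_compat x y : x <= y -> exp x <= exp y.
Proof.
intros [hxy | ->]; [left; apply exp_increasing; exact hxy | right; reflexivity].
Qed.

Lemma rpow_0 p : rpow 0 p = 0.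
Proof. unfold rpow. destruct (Rle_dec 0 0); [reflexivity | lra]. Qed.

Lemma rpow_pos x p : 0 < x -> rpow x p = exp (p * ln x).
Proof. intros hx. unfold rpow. destruct (Rle_dec x 0); [lra | reflexivity]. Qed.

Lemma is_derive_rpow x p : 0 < x -> is_derive (fun y => rpow y p) x (p * rpow x (p - 1)).
Proof.
intros hx. apply (is_derive_ext_loc (fun y => exp (p * ln y))).
- exists (mkposreal x hx). intros y hy. change (Rabs (y - x) < x) in hy.
  apply Rabs_def2 in hy. symmetry. apply rpow_pos. lra.
- rewrite rpow_pos by exact hx. auto_derive; [exact hx|].
  replace ((p - 1) * ln x) with (p * ln x + - ln x) by ring.
  rewrite exp_plus, exp_Ropp, exp_ln by exact hx. field. lra.
Qed.

Lemma continuity_pt_rpow_0 p : 0 < p -> continuity_pt (fun y => rpow y p) 0.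
Proof.
intros hp eps heps. exists (exp (ln eps / p)). split; [apply exp_pos|].
intros y [_ hy]. simpl in *. unfold R_dist in *. rewrite rpow_0, Rminus_0_r in *.
unfold rpow. destruct (Rle_dec y 0) as [hy0 | hy0].
- rewrite Rabs_R0. exact heps.
- apply Rnot_le_lt in hy0. rewrite Rabs_pos_eq in hy by lra.
  unfold Rpower. rewrite Rabs_pos_eq by (left; apply exp_pos).
  rewrite <- (exp_ln eps) by exact heps. apply exp_increasing.
  apply ln_increasing in hy; [|exact hy0]. rewrite ln_exp in hy.
  apply (Rmult_lt_compat_l p) in hy; [|exact hp].
  replace (p * (ln eps / p)) with (ln eps) in hy by (field; lra). exact hy.
Qed.

Lemma continuity_pt_rpow x p : 0 < p -> 0 <= x -> continuity_pt (fun y => rpow y p) x.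
Proof.
intros hp [hx | <-]; [|apply continuity_pt_rpow_0; exact hp].
apply continuity_pt_filterlim.
apply (@ex_derive_continuous R_AbsRing R_NormedModule (fun y => rpow y p)).
eexists. apply is_derive_rpow. exact hx.
Qed.

Lemma derive_nonneg_le (f df : R -> R) a b : a <= b ->
  (forall x, a < x < b -> is_derive f x (df x)) ->
  (forall x, a <= x <= b -> continuity_pt f x) ->
  (forall x, a < x < b -> 0 <= df x) -> f a <= f b.
Proof.
intros hab hder hcont hdf.
(* [MVT_gen] may return an endpoint, where the sign of [df] is unknown. *)
destruct (MVT_gen f a b (fun x => Rmax 0 (df x))) as [c [_ hfc]];
  rewrite ?Rmin_left, ?Rmax_right in * by exact hab.
- intros x hx. rewrite Rmax_right by (apply hdf; exact hx). apply hder, hx.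
- exact hcont.
- pose proof (Rmax_l 0 (df c)). nra.
Qed.

Lemma derive_nonpos_ge (f df : R -> R) a b : a <= b ->
  (forall x, a < x < b -> is_derive f x (df x)) ->
  (forall x, a <= x <= b -> continuity_pt f x) ->
  (forall x, a < x < b -> df x <= 0) -> f b <= f a.
Proof.
intros hab hder hcont hdf.
enough (- f a <= - f b) by lra.
apply (derive_nonneg_le (fun x => - f x) (fun x => - df x)); [exact hab| | |].
- intros x hx. apply (is_derive_opp f), hder, hx.
- intros x hx. apply (continuity_pt_opp f), hcont, hx.
- intros x hx. pose proof (hdf x hx). lra.
Qed.

Lemma Rmin_endpoints_le (f df : R -> R) a b x : a <= x <= b ->
  (forall y, a < y < b -> is_derive f y (df y)) ->
  (forall y, a <= y <= b -> continuity_pt f y) ->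
  (forall y, a < y < x -> 0 <= df y) \/ (forall y, x < y < b -> df y <= 0) ->
  Rmin (f a) (f b) <= f x.
Proof.
intros hx hder hcont [hinc | hdec].
- apply Rle_trans with (f a); [apply Rmin_l|].
  apply (derive_nonneg_le f df); try lra; intros y hy;
    [apply hder | apply hcont | apply hinc]; lra.
- apply Rle_trans with (f b); [apply Rmin_r|].
  apply (derive_nonpos_ge f df); try lra; intros y hy;
    [apply hder | apply hcont | apply hdec]; lra.
Qed.

Lemma unimodal_threshold_dichotomy (g : R -> R) a m b c x : m <= b -> a <= x <= b ->
  (forall u v, a < u -> u <= v -> v <= m -> g u <= g v) ->
  (forall u v, m <= u -> u <= v -> v <= b -> g v <= g u) ->
  c <= g b ->
  (forall y, a < y < x -> g y <= c) \/ (forall y, x < y < b -> c <= g y).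
Proof.
intros hmb hx hinc hdec hc.
assert (tail : forall y, m <= y < b -> c <= g y).
{ intros y hy. apply Rle_trans with (g b); [exact hc | apply hdec; lra]. }
destruct (Rle_lt_dec x a) as [hxa | hax]; [left; intros y hy; lra|].
destruct (Rlt_le_dec m x) as [hmx | hxm]; [right; intros y hy; apply tail; lra|].
destruct (Rle_lt_dec (g x) c) as [hgx | hgx].
- left. intros y hy. apply Rle_trans with (g x); [apply hinc|]; lra.
- right. intros y hy. destruct (Rle_lt_dec y m) as [hym | hmy].
  + apply Rle_trans with (g x); [lra | apply hinc; lra].
  + apply tail. lra.
Qed.

Lemma sin_half_range a : 0 <= a <= PI / 3 -> 0 <= sin (a / 2) <= 1 / 2.
Proof.
intros ha. pose proof PI_RGT_0. split; [apply sin_ge_0; lra|].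
rewrite <- sin_PI6. apply sin_incr_1; lra.
Qed.

Section Profile.

Variable p : R.

Definition G s := 2 * rpow s p + rpow (1 - 2 * s ^ 2) p.

Definition G' s := 2 * p * (rpow s (p - 1) - 2 * s * rpow (1 - 2 * s ^ 2) (p - 1)).

Definition logpsi s := (2 - p) * ln s + (p - 1) * ln (1 - 2 * s ^ 2).

Definition logpsi' s := ((2 - p) - 2 * p * s ^ 2) / (s * (1 - 2 * s ^ 2)).

Lemma Lfun_eq_G a : Lfun p a = 1 + G (sin (a / 2)).
Proof.
assert (hcos : cos a = 1 - 2 * sin (a / 2) ^ 2).
{ replace a with (2 * (a / 2)) at 1 by field. rewrite cos_2a_sin. ring. }
unfold Lfun, G. rewrite hcos. ring.
Qed.

Lemma G_0 : G 0 = 1.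
Proof.
unfold G. rewrite rpow_0, rpow_pos by lra.
replace (1 - 2 * 0 ^ 2) with 1 by ring. rewrite ln_1, !Rmult_0_r, exp_0. ring.
Qed.

Lemma G_half_ge1 : p * ln 2 <= ln 3 -> 1 <= G (1 / 2).
Proof.
intros hp. unfold G. replace (1 - 2 * (1 / 2) ^ 2) with (/ 2) by field.
replace (1 / 2) with (/ 2) by field. rewrite rpow_pos, ln_Rinv by lra.
assert (h3 : exp (- ln 3) <= exp (p * - ln 2)) by (apply exp_le_compat; lra).
rewrite exp_Ropp, exp_ln in h3 by lra. lra.
Qed.

Lemma continuity_pt_G s : 0 < p -> 0 <= s <= 1 / 2 -> continuity_pt G s.
Proof.
intros hp hs.
change (continuity_pt (mult_real_fct 2 (fun s => rpow s p)
                       + comp (fun y => rpow y p) (fun s => (1 - 2 * s ^ 2)%R))%F s).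
apply continuity_pt_plus.
- apply continuity_pt_scal, continuity_pt_rpow; lra.
- apply continuity_pt_comp; [reg | apply continuity_pt_rpow; nra].
Qed.

Lemma is_derive_G s : 0 < s <= 1 / 2 -> is_derive G s (G' s).
Proof.
intros hs.
assert (hsq : is_derive (fun s => 1 - 2 * s ^ 2) s (- (4 * s))).
{ auto_derive; [exact I | ring]. }
replace (G' s) with (plus (scal 2 (p * rpow s (p - 1)))
                          (scal (- (4 * s)) (p * rpow (1 - 2 * s ^ 2) (p - 1))))
  by (unfold G', plus, scal; simpl; unfold mult; simpl; ring).
apply (is_derive_plus (fun s => 2 * rpow s p)).
- apply (is_derive_scal (fun s => rpow s p)), is_derive_rpow. lra.
- apply (is_derive_comp (fun y => rpow y p)); [apply is_derive_rpow; nra | exact hsq].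
Qed.

Lemma G'_eq s : 0 < s <= 1 / 2 ->
  G' s = 2 * p * (exp ((p - 1) * ln s) - exp ((p - 1) * ln s + (ln 2 + logpsi s))).
Proof.
intros hs. unfold G', logpsi. rewrite !rpow_pos by nra.
replace ((p - 1) * ln s + (ln 2 + ((2 - p) * ln s + (p - 1) * ln (1 - 2 * s ^ 2))))
  with (ln 2 + ln s + (p - 1) * ln (1 - 2 * s ^ 2)) by ring.
rewrite !exp_plus, !exp_ln by lra. ring.
Qed.

Lemma G'_nonneg s : 0 < p -> 0 < s <= 1 / 2 -> logpsi s <= - ln 2 -> 0 <= G' s.
Proof.
intros hp hs hlog. rewrite G'_eq by exact hs. apply Rmult_le_pos; [lra|].
enough (exp ((p - 1) * ln s + (ln 2 + logpsi s)) <= exp ((p - 1) * ln s)) by lra.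
apply exp_le_compat. lra.
Qed.

Lemma G'_nonpos s : 0 < p -> 0 < s <= 1 / 2 -> - ln 2 <= logpsi s -> G' s <= 0.
Proof.
intros hp hs hlog. rewrite G'_eq by exact hs.
enough (exp ((p - 1) * ln s) <= exp ((p - 1) * ln s + (ln 2 + logpsi s))) by nra.
apply exp_le_compat. lra.
Qed.

Lemma is_derive_logpsi s : 0 < s <= 1 / 2 -> is_derive logpsi s (logpsi' s).
Proof.
intros hs. unfold logpsi, logpsi'. auto_derive.
- repeat split; nra.
- field. nra.
Qed.

Lemma continuity_pt_logpsi s : 0 < s <= 1 / 2 -> continuity_pt logpsi s.
Proof.
intros hs. apply continuity_pt_filterlim.
apply (@ex_derive_continuous R_AbsRing R_NormedModule logpsi).
eexists. apply is_derive_logpsi, hs.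
Qed.

Lemma logpsi_half : logpsi (1 / 2) = - ln 2.
Proof.
unfold logpsi. replace (1 - 2 * (1 / 2) ^ 2) with (/ 2) by field.
replace (1 / 2) with (/ 2) by field. rewrite ln_Rinv by lra. ring.
Qed.

Definition logpsi_peak := sqrt ((2 - p) / (2 * p)).

Hypothesis p_range : 4 / 3 <= p < 2.

Lemma logpsi_peak_range : 0 < logpsi_peak <= 1 / 2 /\ 2 * p * logpsi_peak ^ 2 = 2 - p.
Proof.
assert (hk : 0 < (2 - p) / (2 * p)) by (apply Rdiv_lt_0_compat; lra).
assert (hsq : logpsi_peak ^ 2 = (2 - p) / (2 * p)).
{ unfold logpsi_peak. rewrite pow2_sqrt; lra. }
assert (hpos : 0 < logpsi_peak) by apply sqrt_lt_R0, hk.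
split; [split; [exact hpos|] | rewrite hsq; field; lra].
assert (logpsi_peak ^ 2 <= (1 / 2) ^ 2).
{ rewrite hsq. apply Rmult_le_reg_r with (2 * p); [lra|].
  unfold Rdiv. rewrite Rmult_assoc, Rinv_l by lra. lra. }
nra.
Qed.

Lemma logpsi_increasing u v : 0 < u -> u <= v -> v <= logpsi_peak -> logpsi u <= logpsi v.
Proof.
intros hu huv hv. destruct logpsi_peak_range as [[_ hpeak] hsq].
apply (derive_nonneg_le logpsi logpsi' u v huv); intros y hy.
- apply is_derive_logpsi. lra.
- apply continuity_pt_logpsi. lra.
- unfold logpsi'. apply Rdiv_le_0_compat; [nra|]. apply Rmult_lt_0_compat; nra.
Qed.

Lemma logpsi_decreasing u v :
  logpsi_peak <= u -> u <= v -> v <= 1 / 2 -> logpsi v <= logpsi u.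
Proof.
intros hu huv hv. destruct logpsi_peak_range as [[hpos _] hsq].
apply (derive_nonpos_ge logpsi logpsi' u v huv); intros y hy.
- apply is_derive_logpsi. lra.
- apply continuity_pt_logpsi. lra.
- unfold logpsi', Rdiv. apply Rmult_le_0_r; [nra|].
  left. apply Rinv_0_lt_compat, Rmult_lt_0_compat; nra.
Qed.

Lemma G_Rmin_endpoints s : 0 <= s <= 1 / 2 -> Rmin (G 0) (G (1 / 2)) <= G s.
Proof.
intros hs. destruct logpsi_peak_range as [[hpos hpeak] _].
apply (Rmin_endpoints_le G G'); [exact hs | intros y hy | intros y hy |].
- apply is_derive_G. lra.
- apply continuity_pt_G; lra.
- destruct (unimodal_threshold_dichotomy logpsi 0 logpsi_peak (1 / 2) (- ln 2) s
              hpeak hs logpsi_increasing logpsi_decreasing (Req_le _ _ (eq_sym logpsi_half)))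
    as [hlow | hhigh].
  + left. intros y hy. apply G'_nonneg; [lra | lra | apply hlow, hy].
  + right. intros y hy. apply G'_nonpos; [lra | lra | apply hhigh, hy].
Qed.

End Profile.

Theorem lemma2p5 (p : R) (hp1 : 4 / 3 <= p) (hp2 : p <= ln 3 / ln 2) :
  (forall a : R, 0 <= a <= PI / 3 ->
     Rmin (Lfun p 0) (Lfun p (PI / 3)) <= Lfun p a) /\
  (forall a : R, 0 <= a <= PI / 3 -> 2 <= Lfun p a).
Proof.
assert (hln2 : 0 < ln 2) by (rewrite <- ln_1; apply ln_increasing; lra).
assert (hln3 : p * ln 2 <= ln 3).
{ apply (Rmult_le_compat_r (ln 2)) in hp2; [|lra].
  unfold Rdiv in hp2. rewrite Rmult_assoc, Rinv_l in hp2 by lra. lra. }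
assert (hp3 : p < 2).
{ assert (h34 : ln 3 < ln (2 * 2)) by (apply ln_increasing; lra).
  rewrite ln_mult in h34 by lra. nra. }
assert (hends : Rmin (Lfun p 0) (Lfun p (PI / 3)) = 1 + Rmin (G p 0) (G p (1 / 2))).
{ rewrite !Lfun_eq_G, Rplus_min_distr_l. do 3 f_equal.
  - replace (0 / 2) with 0 by field. apply sin_0.
  - replace (PI / 3 / 2) with (PI / 6) by field. apply sin_PI6. }
assert (hmin : forall a, 0 <= a <= PI / 3 -> Rmin (Lfun p 0) (Lfun p (PI / 3)) <= Lfun p a).
{ intros a ha. rewrite hends, Lfun_eq_G.
  apply Rplus_le_compat_l, G_Rmin_endpoints; [lra | apply sin_half_range, ha]. }
split; [exact hmin|].
intros a ha. apply Rle_trans with (2 := hmin a ha).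
rewrite hends, G_0.
assert (1 <= Rmin 1 (G p (1 / 2))) by (apply Rmin_glb; [lra | apply G_half_ge1, hln3]).
lra.
Qed.
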